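(* Let $(\mathfrak{g},[\cdot,\cdot,\cdot],\varepsilon,\alpha)$ be a $3$-Hom-Lie color algebra and $\mathcal{N}$ a bijective Nijenhuis operator on it. Let $a\in\mathfrak{g}_0$ with $\alpha(a)=a$ and $\mathcal{N}(a)\in Z(\mathfrak{g})$. Then $\mathcal{N}$ is a Nijenhuis operator on the Hom-Lie color algebra $(\mathfrak{g},\{\cdot,\cdot\},\varepsilon,\alpha)$, where $\{x,y\}=[a,x,y]$; that is, $\{\mathcal{N}x,\mathcal{N}y\}=\mathcal{N}\{\mathcal{N}x,y\}+\mathcal{N}\{x,\mathcal{N}y\}-\mathcal{N}^2\{x,y\}$ for all $x,y\in\mathfrak{g}$.
   Context: $\mathbb{K}$ is a field of characteristic zero and $\Gamma$ an abelian group; $\mathfrak{g}_0$ is the degree-$0$ component. A bicharacter is a map $\varepsilon:\Gamma\times\Gamma\to\mathbb{K}\setminus\{0\}$ with $\varepsilon(a,b)\varepsilon(b,a)=1$, $\varepsilon(a,b+c)=\varepsilon(a,b)\varepsilon(a,c)$, $\varepsilon(a+b,c)=\varepsilon(a,c)\varepsilon(b,c)$. For homogeneous $x,y$, $\varepsilon(x,y)=\varepsilon(|x|,|y|)$ and $\varepsilon(x,y_1+\dots+y_k)=\varepsilon(|x|,|y_1|+\dots+|y_k|)$. A $3$-Hom-Lie color algebra $(\mathfrak{g},[\cdot,\cdot,\cdot],\varepsilon,\alpha)$ is a $\Gamma$-graded vector space with a trilinear bracket of degree zero, a bicharacter $\varepsilon$ and a degree-zero linear map $\alpha$ such that for homogeneous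 elements: (i) $[x_1,\ldots,x_i,x_{i+1},\ldots,x_3]=-\varepsilon(x_i,x_{i+1})[x_1,\ldots,x_{i+1},x_i,\ldots,x_3]$; (ii) $[\alpha(x_1),\alpha(x_2),[y_1,y_2,y_3]]=\sum_{i=1}^3\varepsilon(x_1+x_2,y_1+\dots+y_{i-1})[\alpha(y_1),\ldots,\alpha(y_{i-1}),[x_1,x_2,y_i],\alpha(y_{i+1}),\ldots,\alpha(y_3)]$. The center is $Z(\mathfrak{g})=\{x:[x,y_1,y_2]=0\ \forall y_1,y_2\}$. A degree-zero linear map $\mathcal{N}$ is a Nijenhuis operator on the $3$-ary algebra if $\mathcal{N}\alpha=\alpha\mathcal{N}$ and $[\mathcal{N}x_1,\mathcal{N}x_2,\mathcal{N}x_3]=\mathcal{N}([x_1,x_2,x_3]^2_{\mathcal{N}})$, where $[x]^1_{\mathcal{N}}=\sum_i[\ldots,\mathcal{N}x_i,\ldots]-\mathcal{N}[x_1,x_2,x_3]$ and $[x]^2_{\mathcal{N}}=\sum_{i<j}[\ldots,\mathcal{N}x_i,\ldots,\mathcal{N}x_j,\ldots]-\mathcal{N}([x]^1_{\mathcal{N}})$. A Nijenhuis operator on a Hom-Lie color algebra $(\mathfrak{g},\{\cdot,\cdot\},\varepsilon,\alpha)$ is a degree-zero linear $\mathcal{N}$ with $\mathcal{N}\alpha=\alpha\mathcal{N}$ satisfying the displayed identity. *)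

From HB Require Import structures.
From mathcomp Require Import all_boot all_order all_algebra.
Set Implicit Arguments. Unset Strict Implicit. Unset Printing Implicit Defensive.
Import Order.TTheory GRing.Theory Num.Theory.
Local Open Scope ring_scope.

(* A Gamma-grading of a K-vector space V: a family of subspaces [comp g]
   (the homogeneous components V_g) such that V is their direct sum. *)
Definition is_grading (K : fieldType) (G : zmodType) (V : lmodType K)
  (comp : G -> pred V) : Prop :=
  [/\ (forall g, 0 \in comp g),
      (forall g (c : K) (u v : V), u \in comp g -> v \in comp g ->
          c *: u + v \in comp g),
      (forall x : V, exists (s : seq G) (f : G -> V),
          [/\ uniq s, (forall g, f g \in comp g) & x = \sum_(g <- s) f g]) &
      (forall (s : seq G) (f : G -> V), uniq s -> (forall g, f g \in comp g) ->
          \sum_(g <- s) f g = 0 -> forall g, g \in s -> f g = 0)].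

Definition is_bicharacter (K : fieldType) (G : zmodType) (eps : G -> G -> K)
  : Prop :=
  [/\ (forall a b, eps a b != 0),
      (forall a b, eps a b * eps b a = 1),
      (forall a b c, eps a (b + c) = eps a b * eps a c) &
      (forall a b c, eps (a + b) c = eps a c * eps b c)].

Definition deg0_linear (K : fieldType) (G : zmodType) (V : lmodType K)
  (comp : G -> pred V) (f : V -> V) : Prop :=
  (forall (c : K) (u v : V), f (c *: u + v) = c *: f u + f v) /\
  (forall g x, x \in comp g -> f x \in comp g).

Definition deg0_trilinear (K : fieldType) (G : zmodType) (V : lmodType K)
  (comp : G -> pred V) (br : V -> V -> V -> V) : Prop :=
  [/\ (forall y z (c : K) (u v : V), br (c *: u + v) y z = c *: br u y z + br v y z),
      (forall x z (c : K) (u v : V), br x (c *: u + v) z = c *: br x u z + br x v z),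
      (forall x y (c : K) (u v : V), br x y (c *: u + v) = c *: br x y u + br x y v) &
      (forall g h k x y z, x \in comp g -> y \in comp h -> z \in comp k ->
          br x y z \in comp (g + h + k))].

Definition is_3HomLieColor (K : fieldType) (G : zmodType) (V : lmodType K)
  (comp : G -> pred V) (br : V -> V -> V -> V) (eps : G -> G -> K)
  (alpha : V -> V) : Prop :=
  [/\ is_grading comp, deg0_trilinear comp br, is_bicharacter eps,
      deg0_linear comp alpha &
     [/\
      (forall g1 g2 g3 x1 x2 x3, x1 \in comp g1 -> x2 \in comp g2 ->
          x3 \in comp g3 ->
          br x1 x2 x3 = - (eps g1 g2 *: br x2 x1 x3) /\
          br x1 x2 x3 = - (eps g2 g3 *: br x1 x3 x2)) &
      (forall g1 g2 h1 h2 h3 x1 x2 y1 y2 y3,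
          x1 \in comp g1 -> x2 \in comp g2 ->
          y1 \in comp h1 -> y2 \in comp h2 -> y3 \in comp h3 ->
          br (alpha x1) (alpha x2) (br y1 y2 y3) =
            br (br x1 x2 y1) (alpha y2) (alpha y3)
          + eps (g1 + g2) h1 *: br (alpha y1) (br x1 x2 y2) (alpha y3)
          + eps (g1 + g2) (h1 + h2) *: br (alpha y1) (alpha y2) (br x1 x2 y3))]].

Definition center3 (K : fieldType) (V : lmodType K) (br : V -> V -> V -> V)
  (x : V) : Prop := forall y1 y2, br x y1 y2 = 0.

Definition brN1 (K : fieldType) (V : lmodType K) (br : V -> V -> V -> V)
  (N : V -> V) (x1 x2 x3 : V) : V :=
  br (N x1) x2 x3 + br x1 (N x2) x3 + br x1 x2 (N x3) - N (br x1 x2 x3).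

Definition brN2 (K : fieldType) (V : lmodType K) (br : V -> V -> V -> V)
  (N : V -> V) (x1 x2 x3 : V) : V :=
  br (N x1) (N x2) x3 + br (N x1) x2 (N x3) + br x1 (N x2) (N x3)
  - N (brN1 br N x1 x2 x3).

Definition is_Nijenhuis3 (K : fieldType) (G : zmodType) (V : lmodType K)
  (comp : G -> pred V) (br : V -> V -> V -> V) (alpha N : V -> V) : Prop :=
  [/\ deg0_linear comp N, (forall x, N (alpha x) = alpha (N x)) &
      (forall x1 x2 x3, br (N x1) (N x2) (N x3) = N (brN2 br N x1 x2 x3))].

Definition is_Nijenhuis2 (K : fieldType) (G : zmodType) (V : lmodType K)
  (comp : G -> pred V) (b : V -> V -> V) (alpha N : V -> V) : Prop :=
  [/\ deg0_linear comp N, (forall x, N (alpha x) = alpha (N x)) &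
      (forall x y, b (N x) (N y) =
         N (b (N x) y) + N (b x (N y)) - N (N (b x y)))].

From HB Require Import structures.
From mathcomp Require Import all_boot all_order all_algebra.
Import GRing.Theory.
Local Open Scope ring_scope.

(* Since [N a] is central, the ternary Nijenhuis identity at [(a, x, y)] has a
   vanishing left-hand side, and every term of its right-hand side with [N a]
   in the first slot drops out. What remains is [N] applied to the defect of
   the binary Nijenhuis identity for [{x, y} = [a, x, y]], so injectivity of
   [N] finishes. *)

Section CentralNijenhuis.

Variables (K : fieldType) (V : lmodType K) (br : V -> V -> V -> V).
Variables (N : {additive V -> V}) (a : V).
Hypothesis N_inj : injective N.
Hypothesis Na_central : center3 br (N a).

Lemma brN1_central x y :
  brN1 br N a x y = br a (N x) y + br a x (N y) - N (br a x y).
Proof. by rewrite /brN1 Na_central add0r. Qed.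

Lemma brN2_central x y :
  brN2 br N a x y = br a (N x) (N y) - N (brN1 br N a x y).
Proof. by rewrite /brN2 !Na_central !add0r. Qed.

Lemma Nijenhuis2_of_central_Nijenhuis3 :
  (forall x y, br (N a) (N x) (N y) = N (brN2 br N a x y)) ->
  forall x y, br a (N x) (N y) =
    N (br a (N x) y) + N (br a x (N y)) - N (N (br a x y)).
Proof.
move=> N3 x y.
have /eqP : N (brN2 br N a x y) = 0 by rewrite -N3 Na_central.
rewrite brN2_central raddfB subr_eq0 => /eqP/N_inj ->.
by rewrite brN1_central raddfB raddfD.
Qed.

End CentralNijenhuis.

Theorem corollary6p5 (K : fieldType) (G : zmodType) (V : lmodType K)
  (comp : G -> pred V) (br : V -> V -> V -> V) (eps : G -> G -> K)
  (alpha N : V -> V) (a : V) :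
  [pchar K] =i pred0 ->
  is_3HomLieColor comp br eps alpha ->
  is_Nijenhuis3 comp br alpha N ->
  bijective N ->
  a \in comp 0 ->
  alpha a = a ->
  center3 br (N a) ->
  is_Nijenhuis2 comp (fun x y => br a x y) alpha N.
Proof.
move=> _ _ [N_deg0 N_alpha N3] N_bij _ _ Na_central; split=> //.
pose NL : {linear V -> V} :=
  HB.pack N (GRing.isLinear.Build _ _ _ _ N N_deg0.1).
exact: (@Nijenhuis2_of_central_Nijenhuis3 _ _ br NL a (bij_inj N_bij)).
Qed.
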